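(* Given any integers $W\ge6$, $L\ge2$ and any $\theta_i\in\{0,1\}$ for $i=0,1,\dots,W^2L^2-1$, there exists a ReLU network $\phi:\mathbb{R}\to\mathbb{R}$, $\phi\in\mathcal{NN}(8W+4,4L)$, such that $\phi(i)=\theta_i$ for $i=0,1,\dots,W^2L^2-1$ and $\mathrm{Lip}\,\phi\le2\cdot2^{L^2}+L^2$.
   Context: $\sigma(x)=\max(x,0)$. $\mathcal{NN}(W,L)$: functions $\phi(x)=T_L(\sigma(T_{L-1}(\cdots\sigma(T_0(x))\cdots)))$ with affine maps $T_l$, ReLU componentwise, all hidden layer sizes $\le W$ and depth $\le L$. $\mathrm{Lip}\,\phi$ is the Lipschitz constant of $\phi$. *)

From HB Require Import structures.
From mathcomp Require Import all_boot all_order all_algebra.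
From mathcomp Require Import reals.
Set Implicit Arguments. Unset Strict Implicit. Unset Printing Implicit Defensive.
Import Order.TTheory GRing.Theory Num.Theory.
Local Open Scope ring_scope.

Definition relu {R : realType} (x : R) : R := Num.max x 0.

(* A ReLU network with input dimension m and scalar output.
   [Hidden A b rest] : affine map x |-> A x + b into R^n, then ReLU, then rest.
   [Last A b]        : final affine map T_L : R^m -> R. *)
Inductive relu_net (R : realType) : nat -> Type :=
| Last : forall m, 'M[R]_(1, m) -> 'cV[R]_1 -> relu_net R m
| Hidden : forall m n, 'M[R]_(n, m) -> 'cV[R]_n -> relu_net R n -> relu_net R m.

Fixpoint net_eval (R : realType) m (N : relu_net R m) : 'cV[R]_m -> R :=
  match N with
  | Last _ A b => fun x => (A *m x + b) 0 0
  | Hidden _ _ A b rest => fun x => net_eval rest (map_mx relu (A *m x + b))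
  end.

(* number of hidden layers (= L in phi = T_L o sigma o ... o sigma o T_0) *)
Fixpoint net_depth (R : realType) m (N : relu_net R m) : nat :=
  match N with
  | Last _ _ _ => 0
  | Hidden _ _ _ _ rest => (net_depth rest).+1
  end.

Fixpoint net_width (R : realType) m (N : relu_net R m) : nat :=
  match N with
  | Last _ _ _ => 0
  | Hidden _ n _ _ rest => maxn n (net_width rest)
  end.

Definition realize (R : realType) (N : relu_net R 1) : R -> R :=
  fun x => net_eval N (const_mx x).

Definition in_NN (R : realType) (W L : nat) (phi : R -> R) : Prop :=
  exists N : relu_net R 1,
    [/\ (net_width N <= W)%N, (net_depth N <= L)%N & forall x, phi x = realize N x].

Definition lip_le (R : realType) (phi : R -> R) (C : R) : Prop :=
  forall x y : R, `|phi x - phi y| <= C * `|x - y|.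

From HB Require Import structures.
From mathcomp Require Import all_boot all_order all_algebra.
From mathcomp Require Import reals.
From mathcomp Require Import ring lra zify.
From Stdlib Require Import ClassicalEpsilon.
Set Implicit Arguments. Unset Strict Implicit. Unset Printing Implicit Defensive.
Import Order.TTheory GRing.Theory Num.Theory.
Local Open Scope ring_scope.

(* Write i = c * (L W^2) + m * (L W) + p with c < L, m < W and p < L W: chunk c, block m.
   On chunk c a triangle wave of slope one sends i to p, mirrored on odd blocks, and a
   second triangle wave splits this position into a sub-block t < W and an offset q < L,
   again mirrored so that both maps stay 1-Lipschitz.  The L values of theta on a
   sub-block are stored as a binary fraction, the code of (c, m, t).  Gated by indicators
   of t, a telescoping sum of code differences produces the current code, so that the code
   and the offset are piecewise affine on unit cells with slopes at most 1 and L.  Finally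
   L layers peel off the binary digits of the code and output the digit of rank q; each
   peeling doubles the slope, whence the factor 2^(L^2).  Two hidden layers per chunk and
   L + 2 more give depth 3L + 2 <= 4L, with widths at most 6W + 8. *)

Section Realizability.
Variable R : realType.
Local Notation fn := (R -> R).

Definition nth_fn (F : seq fn) j : fn := nth (fun _ => 0) F j.

Definition affine_in (F : seq fn) (h : fn) := exists (a : nat -> R) (c : R),
  forall x, h x = \sum_(j < size F) a j * nth_fn F j x + c.

Definition relu_layer (F G : seq fn) := exists (A : nat -> nat -> R) (b : nat -> R),
  forall i, (i < size G)%N -> forall x,
    nth_fn G i x = relu (\sum_(j < size F) A i j * nth_fn F j x + b i).

Fixpoint realizable (w : nat) (F : seq fn) (d : nat) (phi : fn) : Prop :=
  match d with
  | 0 => affine_in F phi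
  | d'.+1 => exists G, [/\ (size G <= w)%N, relu_layer F G & realizable w G d' phi]
  end.

Lemma realizable_net w d F phi : realizable w F d phi ->
  exists N : relu_net R (size F), [/\ (net_width N <= w)%N, (net_depth N <= d)%N &
     forall x, phi x = net_eval N (\col_(i < size F) nth_fn F i x)].
Proof.
elim: d F phi => [|d IH] F phi /=.
  move=> [a [c Hc]].
  exists (Last (\row_(j < size F) a j) (const_mx c)); split => // x /=.
  rewrite Hc !mxE; congr (_ + _).
  by apply: eq_bigr => j _; rewrite !mxE.
move=> [G [HG [A [b HA]] /IH [N [Nw Nd HN]]]].
exists (Hidden (\matrix_(i < size G, j < size F) A i j) (\col_(i < size G) b i) N).
split => /=; [by rewrite geq_max HG | by [] |].
move=> x; rewrite HN; congr (net_eval N _).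
apply/matrixP => i j; rewrite !mxE (ord1 j) HA //.
by congr (relu (_ + _)); apply: eq_bigr => k _; rewrite !mxE.
Qed.

Lemma realizable_in_NN w d d' phi : (d <= d')%N -> realizable w [:: id] d phi -> in_NN w d' phi.
Proof.
move=> Hd /realizable_net [N [Nw Nd HN]]; exists N; split; first by [].
  exact: leq_trans Hd.
move=> x; rewrite HN /realize; congr (net_eval N _).
by apply/matrixP => i j; rewrite !mxE (ord1 i).
Qed.

Lemma affine_in_ext F h h' : (forall x, h x = h' x) -> affine_in F h -> affine_in F h'.
Proof. by move=> E [a [c H]]; exists a, c => x; rewrite -E. Qed.

Lemma realizable_ext w F d (f g : fn) :
  (forall x, f x = g x) -> realizable w F d f -> realizable w F d g.
Proof.
move=> E; elim: d F => [|d IH] F /=; first exact: affine_in_ext.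
by move=> [G [HG HFG /IH HGf]]; exists G.
Qed.

Lemma affine_in_const F k : affine_in F (fun _ => k).
Proof.
by exists (fun _ => 0), k => x; rewrite big1 ?add0r // => j _; rewrite mul0r.
Qed.

Lemma affine_in_nth F j : (j < size F)%N -> affine_in F (nth_fn F j).
Proof.
move=> Hj; exists (fun i => (i == j)%:R), 0 => x.
rewrite addr0 (bigD1 (Ordinal Hj)) //= eqxx mul1r big1 ?addr0 // => i Hi.
suff -> : (nat_of_ord i == j) = false by rewrite mul0r.
by apply/negbTE; apply: contra Hi => /eqP Hij; apply/eqP/val_inj.
Qed.

Lemma affine_in_head f F : affine_in (f :: F) f.
Proof. by apply: affine_in_ext (@affine_in_nth (f :: F) 0 isT). Qed.

Lemma affine_in_add F h1 h2 :
  affine_in F h1 -> affine_in F h2 -> affine_in F (fun x => h1 x + h2 x).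
Proof.
move=> [a1 [c1 H1]] [a2 [c2 H2]]; exists (fun j => a1 j + a2 j), (c1 + c2) => x.
rewrite H1 H2; under [X in _ = X + _]eq_bigr => j _ do rewrite mulrDl.
by rewrite big_split /=; ring.
Qed.

Lemma affine_in_scale F k h : affine_in F h -> affine_in F (fun x => k * h x).
Proof.
move=> [a [c H]]; exists (fun j => k * a j), (k * c) => x.
rewrite H mulrDr mulr_sumr; congr (_ + _); apply: eq_bigr => j _; ring.
Qed.

Lemma affine_in_opp F h : affine_in F h -> affine_in F (fun x => - h x).
Proof. by move=> /(affine_in_scale (-1)); apply: affine_in_ext => x; ring. Qed.

Lemma affine_in_sub F h1 h2 :
  affine_in F h1 -> affine_in F h2 -> affine_in F (fun x => h1 x - h2 x).
Proof. by move=> H1 /affine_in_opp; apply: affine_in_add. Qed.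

Lemma affine_in_shift F h k : affine_in F h -> affine_in F (fun x => h x + k).
Proof. by move=> H; apply: affine_in_add H (affine_in_const F k). Qed.

Lemma affine_in_sum F n (h : 'I_n -> fn) : (forall m, affine_in F (h m)) ->
  affine_in F (fun x => \sum_(m < n) h m x).
Proof.
elim: n h => [|n IH] h H.
  by apply: affine_in_ext (affine_in_const F 0) => x; rewrite big_ord0.
apply: (affine_in_ext (h := fun x => \sum_(m < n) h (widen_ord (leqnSn n) m) x + h ord_max x)).
  by move=> x; rewrite big_ord_recr.
by apply: affine_in_add; [apply: IH | apply: H].
Qed.

Lemma nth_fn_catl F1 F2 j : (j < size F1)%N -> nth_fn (F1 ++ F2) j = nth_fn F1 j.
Proof. by move=> H; rewrite /nth_fn nth_cat H. Qed.

Lemma nth_fn_catr F1 F2 j : nth_fn (F1 ++ F2) (size F1 + j) = nth_fn F2 j.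
Proof. by rewrite /nth_fn nth_cat ltnNge leq_addr /= addKn. Qed.

Lemma nth_fn_map_iota (f : nat -> fn) n m :
  (m < n)%N -> nth_fn (map f (iota 0 n)) m = f m.
Proof. by move=> H; rewrite /nth_fn (nth_map 0) ?size_iota // nth_iota. Qed.

Lemma affine_in_catl F1 F2 h : affine_in F1 h -> affine_in (F1 ++ F2) h.
Proof.
move=> [a [c H]].
exists (fun j => if (j < size F1)%N then a j else 0), c => x.
rewrite H size_cat big_split_ord /=.
rewrite [X in _ = _ + X + _]big1 ?addr0; last first.
  by move=> j _; rewrite /= ltnNge leq_addr /= mul0r.
by congr (_ + _); apply: eq_bigr => j _; rewrite /= ltn_ord nth_fn_catl.
Qed.

Lemma affine_in_catr F1 F2 h : affine_in F2 h -> affine_in (F1 ++ F2) h.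
Proof.
move=> [a [c H]].
exists (fun j => if (j < size F1)%N then 0 else a (j - size F1)%N), c => x.
rewrite H size_cat big_split_ord /=.
rewrite [X in _ = X + _ + _]big1 ?add0r; last by move=> j _; rewrite /= ltn_ord mul0r.
congr (_ + _); apply: eq_bigr => j _.
by rewrite /= ltnNge leq_addr /= addKn nth_fn_catr.
Qed.

Lemma affine_in_map (f : nat -> fn) n m : (m < n)%N -> affine_in (map f (iota 0 n)) (f m).
Proof.
move=> H; rewrite -(nth_fn_map_iota f H); apply: affine_in_nth.
by rewrite size_map size_iota.
Qed.

Lemma relu_layer_cat F G1 G2 : relu_layer F G1 -> relu_layer F G2 -> relu_layer F (G1 ++ G2).
Proof.
move=> [A1 [b1 H1]] [A2 [b2 H2]].
exists (fun i => if (i < size G1)%N then A1 i else A2 (i - size G1)%N),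
       (fun i => if (i < size G1)%N then b1 i else b2 (i - size G1)%N).
move=> i; rewrite size_cat => Hi x.
case: (ltnP i (size G1)) => Hi1; first by rewrite nth_fn_catl // H1.
have -> : i = (size G1 + (i - size G1))%N by rewrite subnKC.
rewrite nth_fn_catr H2; last by rewrite -(ltn_add2l (size G1)) subnKC.
by rewrite addKn.
Qed.

Lemma relu_layer_map F (h : nat -> fn) n : (forall m, (m < n)%N -> affine_in F (h m)) ->
  relu_layer F (map (fun m x => relu (h m x)) (iota 0 n)).
Proof.
move=> H.
have coef m : exists a : (nat -> R) * R, (m < n)%N ->
    forall x, h m x = \sum_(j < size F) a.1 j * nth_fn F j x + a.2.
  case: (ltnP m n) => Hm; last by exists (fun _ => 0, 0).
  by have [a [c Hac]] := H m Hm; exists (a, c).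
pose a m := proj1_sig (constructive_indefinite_description _ (coef m)).
have Ha m := proj2_sig (constructive_indefinite_description _ (coef m)).
exists (fun m => (a m).1), (fun m => (a m).2) => i.
rewrite size_map size_iota => Hi x.
by rewrite (nth_fn_map_iota (fun m x => relu (h m x)) Hi) [h i x]Ha.
Qed.

Lemma relu_layer_one F h : affine_in F h -> relu_layer F [:: fun x => relu (h x)].
Proof. by move=> H; apply: (@relu_layer_map F (fun _ => h) 1). Qed.

Lemma relu_layer_pairs F (a b : nat -> fn) n :
  (forall m, (m < n)%N -> affine_in F (a m)) -> (forall m, (m < n)%N -> affine_in F (b m)) ->
  relu_layer F (map (fun m x => relu (a m x)) (iota 0 n) ++
                map (fun m x => relu (b m x)) (iota 0 n)).
Proof. by move=> Ha Hb; apply: relu_layer_cat; apply: relu_layer_map. Qed.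

Lemma affine_in_pairs (f g : nat -> fn) n m : (m < n)%N ->
  affine_in (map f (iota 0 n) ++ map g (iota 0 n)) (fun x => f m x - g m x).
Proof.
move=> H; apply: affine_in_sub.
  by apply: affine_in_catl; apply: affine_in_map.
by apply: affine_in_catr; apply: affine_in_map.
Qed.

Lemma ger0_relu (v : R) : 0 <= v -> relu v = v.
Proof. by move=> H; rewrite /relu max_l. Qed.

Lemma ler0_relu (v : R) : v <= 0 -> relu v = 0.
Proof. by move=> H; rewrite /relu max_r. Qed.

(* A value passes unchanged through a hidden layer as the pair [relu h], [relu (- h)]. *)
Definition relu_pair (h : fn) : seq fn := [:: fun x => relu (h x); fun x => relu (- h x)].

Lemma relu_subN (v : R) : relu v - relu (- v) = v.
Proof.
case: (lerP 0 v) => H.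
  by rewrite ger0_relu // ler0_relu ?subr0 // oppr_le0.
by rewrite ler0_relu ?(ltW H) // ger0_relu ?oppr_ge0 ?(ltW H) //; ring.
Qed.

Lemma relu_layer_pair F h : affine_in F h -> relu_layer F (relu_pair h).
Proof.
move=> H; apply: (@relu_layer_cat F [:: _] [:: _]); apply: relu_layer_one => //.
exact: affine_in_opp.
Qed.

Lemma affine_in_relu_pair h : affine_in (relu_pair h) h.
Proof.
apply: (affine_in_ext (h := fun x => nth_fn (relu_pair h) 0 x - nth_fn (relu_pair h) 1 x)).
  by move=> x; rewrite /nth_fn /= relu_subN.
by apply: affine_in_sub; apply: affine_in_nth.
Qed.

End Realizability.

Section PiecewiseLinear.
Variable R : realType.
Implicit Types (a b v x y : R) (h : R -> R).

Lemma relu_cases v : (0 <= v /\ relu v = v) \/ (v <= 0 /\ relu v = 0).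
Proof.
case: (lerP 0 v) => H; first by left; rewrite ger0_relu.
by right; rewrite ler0_relu ?(ltW H).
Qed.

Lemma dist_bounds a b : a - b <= `|a - b| /\ b - a <= `|a - b|.
Proof. by split; [|rewrite distrC]; apply: ler_norm. Qed.

Lemma relu_dist_le a b : `|relu a - relu b| <= `|a - b|.
Proof.
have [Hab Hba] := dist_bounds a b.
case: (relu_cases a) => [[Ha ->]|[Ha ->]]; case: (relu_cases b) => [[Hb ->]|[Hb ->]];
  rewrite ler_norml; apply/andP; split; lra.
Qed.

(* [gate D s = s * D] for [s] in [{0, 1}] and [D] in [[-1, 1]]. *)
Definition gate (D s : R) : R := relu (D + 2 * s - 1) - s.

Lemma gate_bit (D : R) (b : bool) : -1 <= D <= 1 -> gate D b%:R = b%:R * D.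
Proof.
move=> /andP[H1 H2]; rewrite /gate; case: b => /=.
  by rewrite ger0_relu ?mul1r; lra.
by rewrite ler0_relu ?mul0r ?subr0 //; lra.
Qed.

Lemma gate_dist_le (D a b : R) : `|gate D a - gate D b| <= `|a - b|.
Proof.
have [Hab Hba] := dist_bounds a b; rewrite /gate.
case: (relu_cases (D + 2 * a - 1)) => [[Ha ->]|[Ha ->]];
case: (relu_cases (D + 2 * b - 1)) => [[Hb ->]|[Hb ->]];
  rewrite ler_norml; apply/andP; split; lra.
Qed.

Definition clamp (Q v : R) : R := relu v - relu (v - Q).

Lemma clamp_eq0 Q v : 0 <= Q -> v <= 0 -> clamp Q v = 0.
Proof. by move=> HQ Hv; rewrite /clamp !ler0_relu ?subrr //; lra. Qed.

Lemma clamp_id Q v : 0 <= v -> v <= Q -> clamp Q v = v.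
Proof. by move=> H1 H2; rewrite /clamp ger0_relu // ler0_relu ?subr0 //; lra. Qed.

Lemma clamp_sat Q v : 0 <= Q -> Q <= v -> clamp Q v = Q.
Proof. by move=> H1 H2; rewrite /clamp !ger0_relu; lra. Qed.

Definition ramp v : R := clamp 1 v.

Lemma ramp_eq0 v : v <= 0 -> ramp v = 0.
Proof. exact: clamp_eq0. Qed.

Lemma ramp_eq1 v : 1 <= v -> ramp v = 1.
Proof. exact: clamp_sat. Qed.

Lemma ramp_id v : 0 <= v -> v <= 1 -> ramp v = v.
Proof. exact: clamp_id. Qed.

Lemma ramp_cases v : [\/ v <= 0 /\ ramp v = 0, [/\ 0 <= v, v <= 1 & ramp v = v]
   | 1 <= v /\ ramp v = 1].
Proof.
case: (lerP v 0) => H0; first by apply: Or31; rewrite ramp_eq0.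
case: (lerP v 1) => H1; first by apply: Or32; rewrite ramp_id // ltW.
by apply: Or33; rewrite ramp_eq1 // ltW.
Qed.

Lemma ramp_dist_le a b : `|ramp a - ramp b| <= `|a - b|.
Proof.
have [Hab Hba] := dist_bounds a b.
case: (ramp_cases a) => [[Ha ->]|[Ha Ha' ->]|[Ha ->]];
case: (ramp_cases b) => [[Hb ->]|[Hb Hb' ->]|[Hb ->]];
  rewrite ler_norml; apply/andP; split; lra.
Qed.

Lemma ramp_ge0 v : 0 <= ramp v.
Proof. by case: (ramp_cases v) => [[_ ->]|[? ? ->]|[_ ->]] //; lra. Qed.

Lemma ramp_le1 v : ramp v <= 1.
Proof. by case: (ramp_cases v) => [[_ ->]|[? ? ->]|[_ ->]] //; lra. Qed.

Lemma ramp_le a b : a <= b -> ramp a <= ramp b.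
Proof.
move=> H; case: (ramp_cases a) => [[Ha ->]|[Ha Ha' ->]|[Ha ->]];
  case: (ramp_cases b) => [[Hb ->]|[Hb Hb' ->]|[Hb ->]]; lra.
Qed.

Lemma ramp_int (k : int) : ramp k%:~R = if (0 < k)%R then 1 else 0.
Proof.
case: (lerP k 0) => H.
  by rewrite ramp_eq0 // lerz0.
by rewrite ramp_eq1 // ler1z; lia.
Qed.

Lemma lip_le_mono h C C' : C <= C' -> lip_le h C -> lip_le h C'.
Proof.
by move=> HC H x y; apply: le_trans (H x y) _; apply: ler_wpM2r.
Qed.

Lemma lip_le_const k : lip_le (fun _ : R => k) 0.
Proof. by move=> x y; rewrite subrr normr0 mul0r. Qed.

Lemma lip_le_add h1 h2 C1 C2 : lip_le h1 C1 -> lip_le h2 C2 ->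
  lip_le (fun x => h1 x + h2 x) (C1 + C2).
Proof.
move=> H1 H2 x y.
have -> : h1 x + h2 x - (h1 y + h2 y) = (h1 x - h1 y) + (h2 x - h2 y) by ring.
by apply: le_trans (ler_normD _ _) _; rewrite mulrDl; apply: lerD.
Qed.

Lemma lip_le_scale h k C : lip_le h C -> lip_le (fun x => k * h x) (`|k| * C).
Proof. by move=> H x y; rewrite -mulrBr normrM -mulrA; apply: ler_wpM2l. Qed.

Lemma lip_le_opp h C : lip_le h C -> lip_le (fun x => - h x) C.
Proof. by move=> H x y; rewrite -opprD normrN. Qed.

Lemma lip_le_sub h1 h2 C1 C2 : lip_le h1 C1 -> lip_le h2 C2 ->
  lip_le (fun x => h1 x - h2 x) (C1 + C2).
Proof. by move=> H1 /lip_le_opp; apply: lip_le_add. Qed.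

Lemma lip_le_shift h k C : lip_le h C -> lip_le (fun x => h x + k) C.
Proof.
by move=> H; rewrite -[C]addr0; apply: lip_le_add H (lip_le_const k).
Qed.

Lemma lip_le_relu h C : lip_le h C -> lip_le (fun x => relu (h x)) C.
Proof. by move=> H x y; apply: le_trans (relu_dist_le _ _) (H x y). Qed.

Lemma lip_le_ramp h C : lip_le h C -> lip_le (fun x => ramp (h x)) C.
Proof. by move=> H x y; apply: le_trans (ramp_dist_le _ _) (H x y). Qed.

Definition cell_affine h := forall (n : int) (s : R), 0 <= s -> s <= 1 ->
  h (n%:~R + s) = h n%:~R + s * (h (n + 1)%:~R - h n%:~R).

Lemma cell_affine_flat h (n : int) : cell_affine h -> h (n + 1)%:~R = h n%:~R ->
  forall s, 0 <= s -> s <= 1 -> h (n%:~R + s) = h n%:~R.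
Proof. by move=> H E s S1 S2; rewrite H // E subrr mulr0 addr0. Qed.

Lemma cell_affine_ext h h' : (forall x, h x = h' x) -> cell_affine h -> cell_affine h'.
Proof. by move=> E H n s H1 H2; rewrite -!E H. Qed.

Lemma cell_affine_id : cell_affine (fun x => x).
Proof. by move=> n s _ _; rewrite intrD; ring. Qed.

Lemma cell_affine_const k : cell_affine (fun _ => k).
Proof. by move=> n s _ _; ring. Qed.

Lemma cell_affine_add h1 h2 :
  cell_affine h1 -> cell_affine h2 -> cell_affine (fun x => h1 x + h2 x).
Proof. by move=> H1 H2 n s S1 S2; rewrite H1 // H2 //; ring. Qed.

Lemma cell_affine_scale k h : cell_affine h -> cell_affine (fun x => k * h x).
Proof. by move=> H n s S1 S2; rewrite H //; ring. Qed.

Lemma cell_affine_sub h1 h2 :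
  cell_affine h1 -> cell_affine h2 -> cell_affine (fun x => h1 x - h2 x).
Proof. by move=> H1 H2 n s S1 S2; rewrite H1 // H2 //; ring. Qed.

Lemma cell_affine_sum n (h : 'I_n -> R -> R) : (forall m, cell_affine (h m)) ->
  cell_affine (fun x => \sum_(m < n) h m x).
Proof.
elim: n h => [|n IH] h H.
  by apply: cell_affine_ext (cell_affine_const 0) => x; rewrite big_ord0.
apply: (cell_affine_ext (h := fun x => \sum_(m < n) h (widen_ord (leqnSn n) m) x + h ord_max x)).
  by move=> x; rewrite big_ord_recr.
by apply: cell_affine_add; [apply: IH | apply: H].
Qed.

Definition int_steps h := forall n : int, exists k k' : int,
  [/\ h n%:~R = k%:~R, h (n + 1)%:~R = k'%:~R & (k' <= k + 1 /\ k <= k' + 1)%R].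

Lemma int_steps_shift h (c : int) : int_steps h -> int_steps (fun x => h x + c%:~R).
Proof.
move=> H n; have [k [k' [E1 E2 [H1 H2]]]] := H n.
by exists (k + c), (k' + c); rewrite E1 E2 !intrD; split => //; lia.
Qed.

Lemma int_steps_id : int_steps (fun x => x).
Proof. by move=> n; exists n, (n + 1)%R; split => //; lia. Qed.

(* Such a function never changes sign strictly inside a cell, so [relu] keeps it affine there. *)
Lemma cell_affine_relu h : cell_affine h -> int_steps h -> cell_affine (fun x => relu (h x)).
Proof.
move=> H Hs n s S1 S2; rewrite H //.
have [k [k' [E E' [K1 K2]]]] := Hs n; rewrite E E'.
have -> : k%:~R + s * (k'%:~R - k%:~R) = (1 - s) * k%:~R + s * k'%:~R :> R by ring.
have [[Hk Hk']|[Hk Hk']] : (0 <= k /\ 0 <= k')%R \/ (k <= 0 /\ k' <= 0)%R by lia.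
  rewrite !ger0_relu ?ler0z //; first ring.
  by apply: addr_ge0; apply: mulr_ge0; rewrite ?ler0z //; lra.
rewrite -!(ler_int R) in Hk Hk'.
rewrite !ler0_relu //; first ring.
by have := mulr_ge0_le0 (_ : 0 <= 1 - s) Hk; have := mulr_ge0_le0 S1 Hk'; lra.
Qed.

Lemma cell_affine_relu_shift h (k : int) :
  cell_affine h -> int_steps h -> cell_affine (fun x => relu (h x + k%:~R)).
Proof.
move=> H1 H2; apply: cell_affine_relu; last exact: int_steps_shift.
by apply: cell_affine_add H1 (cell_affine_const _).
Qed.

Lemma cell_affine_clamp h (Q : nat) (k : int) : cell_affine h -> int_steps h ->
  cell_affine (fun x => clamp Q%:R (h x + k%:~R)).
Proof.
move=> H1 H2; apply: cell_affine_sub; first exact: cell_affine_relu_shift.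
apply: (cell_affine_ext (h := fun x => relu (h x + (k - Q%:Z)%:~R))).
  by move=> x; rewrite intrB -pmulrn addrA.
exact: cell_affine_relu_shift.
Qed.

Definition cell_lip h C := forall (n : int) s s', 0 <= s -> s <= 1 -> 0 <= s' -> s' <= 1 ->
  `|h (n%:~R + s) - h (n%:~R + s')| <= C * `|s - s'|.

Lemma cell_affine_lip h C : cell_affine h ->
  (forall n : int, `|h (n + 1)%:~R - h n%:~R| <= C) -> cell_lip h C.
Proof.
move=> H Hd n s s' S1 S2 S3 S4; rewrite !H //.
have -> : h n%:~R + s * (h (n + 1)%:~R - h n%:~R) -
          (h n%:~R + s' * (h (n + 1)%:~R - h n%:~R)) =
          (s - s') * (h (n + 1)%:~R - h n%:~R) by ring.
by rewrite normrM mulrC; apply: ler_wpM2r.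
Qed.

Section CellLip.
Variables (h : R -> R) (C : R).
Hypotheses (C_ge0 : 0 <= C) (hC : cell_lip h C).

Lemma cell_lip_within (n : int) x y : n%:~R <= x -> x <= y -> y <= n%:~R + 1 ->
  `|h x - h y| <= C * (y - x).
Proof.
move=> Hx Hxy Hy.
have := hC n (s := x - n%:~R) (s' := y - n%:~R); rewrite !subrKC.
have -> : x - n%:~R - (y - n%:~R) = x - y by ring.
by rewrite (distrC x) (ger0_norm (_ : 0 <= y - x)) ?subr_ge0 //; apply; lra.
Qed.

Lemma cell_lip_ordered (k : nat) x y : x <= y -> (Num.floor y - Num.floor x)%R = k ->
  `|h x - h y| <= C * (y - x).
Proof.
elim: k x y => [|k IH] x y Hxy Ek; move: (floor_itv x) => /andP[Hx1 Hx2].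
  have /andP[_ Hy2] := floor_itv y.
  have Ey : Num.floor y = Num.floor x by lia.
  by apply: (cell_lip_within Hx1) => //; rewrite Ey intrD in Hy2; lra.
set n := Num.floor x in Hx1 Hx2 Ek; set z : R := (n + 1)%:~R.
have Hzy : z <= y.
  apply: le_trans (floor_le y); rewrite /z ler_int.
  move: Ek; set fy := Num.floor y; lia.
have Hxz : `|h x - h z| <= C * (z - x).
  by apply: (cell_lip_within Hx1); rewrite /z ?intrD; lra.
have Hzy' : `|h z - h y| <= C * (y - z).
  apply: IH; rewrite // /z intrKfloor; move: Ek; set fy := Num.floor y; lia.
have -> : h x - h y = (h x - h z) + (h z - h y) by ring.
have -> : C * (y - x) = C * (z - x) + C * (y - z) by ring.
by apply: le_trans (ler_normD _ _) _; apply: lerD.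
Qed.

Lemma cell_lip_lip : lip_le h C.
Proof.
have ordered x y : x <= y -> `|h x - h y| <= C * (y - x).
  move=> Hxy; have [k Ek] : exists k : nat, (Num.floor y - Num.floor x)%R = k.
    by exists `|(Num.floor y - Num.floor x)%R|%N; have := le_floor Hxy; lia.
  exact: cell_lip_ordered Hxy Ek.
move=> x y; case: (lerP x y) => [|/ltW] Hxy; first exact: ordered.
by rewrite distrC; apply: ordered.
Qed.

End CellLip.

End PiecewiseLinear.

Definition mirror (P m p : nat) : nat := if odd m then (P.-1 - p)%N else p.

Lemma mirror_lt P m p : (p < P)%N -> (mirror P m p < P)%N.
Proof. by rewrite /mirror; case: (odd m) => H //; lia. Qed.

Lemma mirrorK P m p : (p < P)%N -> mirror P m (mirror P m p) = p.
Proof. by rewrite /mirror; case: (odd m) => H //; lia. Qed.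

Lemma divn_modn_block (P m p : nat) : (p < P)%N ->
  ((m * P + p) %/ P = m /\ (m * P + p) %% P = p)%N.
Proof.
move=> H; have HP : (0 < P)%N by lia.
by rewrite divnMDl // divn_small // addn0 modnMDl modn_small.
Qed.

Definition zigzagn (P K n : nat) : nat :=
  if (n < K * P)%N then mirror P (n %/ P) (n %% P) else (if odd K then P.-1 else 0%N).

Section IntegerZigzag.
Variables (P K : nat).
Hypothesis P_gt0 : (0 < P)%N.

Lemma zigzagn_le n : (zigzagn P K n <= P.-1)%N.
Proof.
rewrite /zigzagn /mirror; case: ifP => _; last by case: ifP => //; lia.
by have := ltn_pmod n P_gt0; case: ifP => _; lia.
Qed.

Lemma zigzagn_block m p : (m < K)%N -> (p < P)%N -> zigzagn P K (m * P + p) = mirror P m p.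
Proof.
move=> Hm Hp; have [E1 E2] := divn_modn_block m Hp.
by rewrite /zigzagn E1 E2 ifT //; nia.
Qed.

Lemma zigzagn_sat n : (K * P <= n)%N -> zigzagn P K n = if odd K then P.-1 else 0%N.
Proof. by move=> H; rewrite /zigzagn ltnNge H. Qed.

Lemma zigzagn_0 : zigzagn P K 0 = 0%N.
Proof.
case: (posnP K) => [K0|K_gt0]; first by rewrite zigzagn_sat K0.
by rewrite -[0%N]/(0 * P + 0)%N zigzagn_block.
Qed.

Lemma zigzagn_boundary q : (0 < q <= K)%N -> zigzagn P K (q * P).-1 = zigzagn P K (q * P).
Proof.
case: q => // q /andP[_ HqK].
have -> : (q.+1 * P).-1 = (q * P + P.-1)%N by rewrite mulSn; lia.
rewrite zigzagn_block; [|lia|lia].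
case: (ltnP q.+1 K) => Hq.
  by rewrite -[(q.+1 * P)%N]addn0 zigzagn_block // /mirror /=; case: (odd q) => /=; lia.
rewrite zigzagn_sat ?leq_pmul2r // (_ : K = q.+1) /mirror /=; last by lia.
by case: (odd q) => /=; lia.
Qed.

Lemma zigzagn_flat n : ~~ ((n.+1 < K * P) && (n.+1 %% P != 0))%N ->
  zigzagn P K n.+1 = zigzagn P K n.
Proof.
case: (leqP (K * P) n) => HnK H; first by rewrite !zigzagn_sat //; lia.
have Hmod : (n.+1 %% P = 0)%N.
  case: (ltnP n.+1 (K * P)) => HK; first by move: H; rewrite HK /= negbK => /eqP.
  by rewrite (_ : n.+1 = K * P)%N ?modnMl //; lia.
set q := (n.+1 %/ P)%N.
have En : n.+1 = (q * P)%N by rewrite {1}(divn_eq n.+1 P) Hmod addn0.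
have Hq : (0 < q <= K)%N by apply/andP; split; nia.
by rewrite En -zigzagn_boundary // -En.
Qed.

Lemma zigzagn_walk n :
  [/\ (zigzagn P K n.+1 <= (zigzagn P K n).+1)%N, (zigzagn P K n <= (zigzagn P K n.+1).+1)%N &
      (zigzagn P K n.+1 != zigzagn P K n -> (n.+1 < K * P)%N /\ (n.+1 %% P != 0)%N)].
Proof.
case: (boolP ((n.+1 < K * P) && (n.+1 %% P != 0))%N) => [/andP[HnK Hmod]|H]; last first.
  by rewrite zigzagn_flat // eqxx; split.
suff : (zigzagn P K n.+1 <= (zigzagn P K n).+1 /\
         zigzagn P K n <= (zigzagn P K n.+1).+1)%N by case.
set m := (n %/ P)%N; set p := (n %% P)%N.
have Hp : (p.+1 < P)%N.
  rewrite ltn_neqAle ltn_pmod // andbT; apply: contra Hmod => /eqP Hp.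
  by rewrite {1}(divn_eq n P) -addnS Hp modnMDl modnn.
have Hm : (m < K)%N by rewrite ltn_divLR //; lia.
rewrite (divn_eq n P) -/m -/p -addnS !zigzagn_block ?ltn_pmod // /mirror.
by case: (odd m); lia.
Qed.

End IntegerZigzag.

Section RealZigzag.
Variable R : realType.

Definition zigzag (P K : nat) (v : R) : R :=
  \sum_(m < K) (-1) ^+ m * clamp (P.-1)%:R (v - (m * P)%:R).

Lemma zigzag_le0 P K v : v <= 0 -> zigzag P K v = 0.
Proof.
move=> Hv; rewrite /zigzag big1 // => m _.
by rewrite clamp_eq0 ?mulr0 ?ler0n //; have := ler0n R (m * P); lra.
Qed.

Lemma sign_odd (k : nat) : (-1) ^+ k = (if odd k then -1 else 1 : R).
Proof. by rewrite -signr_odd; case: (odd k); rewrite ?expr1 ?expr0. Qed.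

Lemma zigzag_sat P K v : (0 < P)%N -> ((K * P).-1)%:R <= v ->
  zigzag P K v = (if odd K then P.-1 else 0%N)%:R.
Proof.
move=> HP; elim: K v => [|K IH] v Hv; first by rewrite /zigzag big_ord0.
rewrite /zigzag big_ord_recr /= -/(zigzag P K v) IH; last first.
  by apply: le_trans Hv; rewrite ler_nat; nia.
rewrite clamp_sat ?ler0n //; last first.
  by rewrite lerBrDr -natrD; apply: le_trans Hv; rewrite ler_nat; nia.
by rewrite sign_odd; case: (odd K) => /=; rewrite ?mulN1r ?mul1r ?add0r ?subrr.
Qed.

Lemma zigzag_block P K m p : (0 < P)%N -> (m < K)%N -> (p < P)%N ->
  zigzag P K (m * P + p)%:R = (mirror P m p)%:R.
Proof.
move=> HP; elim: K m => [//|K IH] m Hm Hp.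
rewrite /zigzag big_ord_recr /= -/(zigzag P K _).
case: (ltnP m K) => HmK.
  rewrite IH // clamp_eq0 ?ler0n ?mulr0 ?addr0 //.
  by rewrite subr_le0 ler_nat; nia.
have Em : m = K by lia.
rewrite zigzag_sat //; last by rewrite ler_nat Em; nia.
have E : (K * P + p)%:R - (K * P)%:R = p%:R :> R by rewrite natrD; ring.
rewrite Em E clamp_id ?ler0n ?ler_nat //; last by lia.
rewrite sign_odd /mirror.
case: (odd K) => /=; last by rewrite mul1r add0r.
by rewrite natrB ?mulN1r //; lia.
Qed.

Lemma zigzag_nat P K n : (0 < P)%N -> zigzag P K n%:R = (zigzagn P K n)%:R :> R.
Proof.
move=> HP; rewrite /zigzagn; case: ifP => H.
  by rewrite {1}(divn_eq n P) zigzag_block ?ltn_pmod // ltn_divLR.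
by rewrite zigzag_sat // ler_nat; lia.
Qed.

Lemma zigzag_int P K (u : int) : (0 < P)%N ->
  zigzag P K u%:~R = (if (u <= 0)%R then 0%N else zigzagn P K `|u|%N)%:R :> R.
Proof.
move=> HP; case: ifP => H; first by rewrite zigzag_le0 // lerz0.
by rewrite (_ : u = `|u|%N) ?zigzag_nat //; lia.
Qed.

Lemma cell_affine_zigzag P K (h : R -> R) (k : int) : cell_affine h -> int_steps h ->
  cell_affine (fun x => zigzag P K (h x + k%:~R)).
Proof.
move=> H1 H2; apply: cell_affine_sum => m; apply: cell_affine_scale.
apply: (cell_affine_ext (h := fun x => clamp (P.-1)%:R (h x + (k - (m * P)%:Z)%:~R))).
  by move=> x; rewrite intrB -pmulrn addrA.
exact: cell_affine_clamp.
Qed.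

End RealZigzag.

Section ClampPairs.
Variable R : realType.
Local Notation fn := (R -> R).

Definition clamp_pairs (Q : R) (f : nat -> fn) n : seq fn :=
  map (fun m x => relu (f m x)) (iota 0 n) ++ map (fun m x => relu (f m x - Q)) (iota 0 n).

Lemma size_clamp_pairs Q f n : size (clamp_pairs Q f n) = (2 * n)%N.
Proof. by rewrite /clamp_pairs size_cat !size_map size_iota; lia. Qed.

Lemma relu_layer_clamp_pairs F Q f n : (forall m, (m < n)%N -> affine_in F (f m)) ->
  relu_layer F (clamp_pairs Q f n).
Proof.
move=> Hf; apply: relu_layer_pairs => // m Hm.
by apply: affine_in_shift; apply: Hf.
Qed.

Lemma affine_in_clamp_pairs Q f n m : (m < n)%N ->
  affine_in (clamp_pairs Q f n) (fun x => clamp Q (f m x)).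
Proof.
exact: (affine_in_pairs (fun m x => relu (f m x)) (fun m x => relu (f m x - Q))).
Qed.

End ClampPairs.

Section BitExtraction.
Variable R : realType.
Local Notation fn := (R -> R).

(* A sum [v = \sum_(i < j) a_i / 2^(i+1)] of bits is either [>= 1/2] or [<= 1/2 - 1/2^j],
   and the ramp of slope [2^j] separates the two cases. *)
Definition lead_bit j (v : R) : R := ramp (2 ^+ j * (v - 2^-1) + 1).

Definition eq_ind (s : nat) (v : R) : R := ramp (v - s%:R + 1) - ramp (v - s%:R).

(* [extract_bits bf j s z x] is bit number [bf x - s] of the [j]-bit fraction [z x];
   [relu (b + e - 1)] is the conjunction of the bits [b] and [e]. *)
Fixpoint extract_bits (bf : fn) j s (z : fn) : fn :=
  match j with
  | 0 => fun _ => 0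
  | j'.+1 => fun x => relu (lead_bit j (z x) + eq_ind s (bf x) - 1) +
        extract_bits bf j' s.+1 (fun x => 2 * z x - lead_bit j (z x)) x
  end.

Lemma extract_bits_ext bf bf' j s z z' : (forall x, bf x = bf' x) -> (forall x, z x = z' x) ->
  forall x, extract_bits bf j s z x = extract_bits bf' j s z' x.
Proof.
move=> Eb; elim: j s z z' => [//|j IH] s z z' Ez x /=.
by rewrite Eb Ez; congr (_ + _); apply: IH => y; rewrite Ez.
Qed.

Definition bit_layer j s (bf z acc h : fn) : seq fn :=
  relu_pair z ++ clamp_pairs 1 (fun _ x => 2 ^+ j * (z x - 2^-1) + 1) 1 ++
  relu_pair bf ++ clamp_pairs 1 (fun _ x => bf x - s%:R + 1) 1 ++
  clamp_pairs 1 (fun _ x => bf x - s%:R) 1 ++ relu_pair acc ++ [:: fun x => relu (h x)].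

Lemma relu_layer_bit_layer j s (F : seq fn) bf z acc h :
  affine_in F z -> affine_in F bf -> affine_in F acc -> affine_in F h ->
  relu_layer F (bit_layer j s bf z acc h).
Proof.
move=> Hz Hb Ha Hh; rewrite /bit_layer.
apply: relu_layer_cat; first exact: relu_layer_pair.
apply: relu_layer_cat.
  by apply: relu_layer_clamp_pairs => _ _; apply/affine_in_shift/affine_in_scale/affine_in_shift.
apply: relu_layer_cat; first exact: relu_layer_pair.
apply: relu_layer_cat; first by apply: relu_layer_clamp_pairs => _ _; do 2 apply: affine_in_shift.
apply: relu_layer_cat; first by apply: relu_layer_clamp_pairs => _ _; apply: affine_in_shift.
apply: relu_layer_cat; first exact: relu_layer_pair.
exact: relu_layer_one.
Qed.

Lemma realizable_extract_bits w bf j : (13 <= w)%N -> forall s (F : seq fn) z acc h,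
  affine_in F z -> affine_in F bf -> affine_in F acc -> affine_in F h ->
  realizable w F j.+1 (fun x => acc x + relu (h x) + extract_bits bf j s z x).
Proof.
move=> Hw; elim: j => [|j IH] s F z acc h Hz Hb Ha Hh.
  exists (relu_pair acc ++ [:: fun x => relu (h x)]); split.
  - by rewrite size_cat /=; lia.
  - by apply: relu_layer_cat; [apply: relu_layer_pair | apply: relu_layer_one].
  apply: (affine_in_ext (h := fun x => acc x + relu (h x))) => [x|]; first by rewrite addr0.
  apply: affine_in_add; first by apply: affine_in_catl; apply: affine_in_relu_pair.
  by apply: affine_in_catr; apply: affine_in_head.
set G := bit_layer j.+1 s bf z acc h.
have bit_G : affine_in G (fun x => lead_bit j.+1 (z x)).
  by apply: affine_in_catr; apply: affine_in_catl; apply: (affine_in_clamp_pairs _ _ (ltn0Sn 0)).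
have Gz : affine_in G (fun x => 2 * z x - lead_bit j.+1 (z x)).
  apply: affine_in_sub bit_G; apply: affine_in_scale.
  by apply: affine_in_catl; apply: affine_in_relu_pair.
have Gb : affine_in G bf.
  by do 2 apply: affine_in_catr; apply: affine_in_catl; apply: affine_in_relu_pair.
have Geq : affine_in G (fun x => eq_ind s (bf x)).
  apply: affine_in_sub; [do 3 apply: affine_in_catr | do 4 apply: affine_in_catr];
    by apply: affine_in_catl; apply: (affine_in_clamp_pairs _ _ (ltn0Sn 0)).
have Ga : affine_in G (fun x => acc x + relu (h x)).
  apply: affine_in_add; last by do 6 apply: affine_in_catr; apply: affine_in_head.
  by do 5 apply: affine_in_catr; apply: affine_in_catl; apply: affine_in_relu_pair.
have Gh : affine_in G (fun x => lead_bit j.+1 (z x) + eq_ind s (bf x) - 1).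
  by apply: affine_in_shift; apply: affine_in_add.
exists G; split; [by rewrite /G /bit_layer /=; lia | exact: relu_layer_bit_layer |].
by apply: realizable_ext (IH s.+1 G _ _ _ Gz Gb Ga Gh) => x /=; ring.
Qed.

Lemma pow2_gt0 j : (0 : R) < 2 ^+ j.
Proof. by apply: exprn_gt0; lra. Qed.

Lemma bit_bounds (b : bool) : 0 <= (b%:R : R) <= 1.
Proof. by case: b => /=; apply/andP; split; lra. Qed.

Lemma sum_inv_pow2 j : \sum_(i < j) (2 ^+ i.+1)^-1 = 1 - (2 ^+ j)^-1 :> R.
Proof.
elim: j => [|j IH]; first by rewrite big_ord0 expr0 invr1 subrr.
rewrite big_ord_recr /= IH exprS.
have H : (2 ^+ j : R) != 0 by rewrite expf_neq0 // pnatr_eq0.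
by field.
Qed.

Lemma bits_sum_bounds j (a : nat -> bool) :
  0 <= \sum_(i < j) ((a i)%:R * (2 ^+ i.+1)^-1 : R) <= 1 - (2 ^+ j)^-1.
Proof.
have w_ge0 i : (0 : R) <= (2 ^+ i.+1)^-1 by rewrite invr_ge0 ltW // pow2_gt0.
apply/andP; split.
  by apply: sumr_ge0 => i _; apply: mulr_ge0 => //; case/andP: (bit_bounds (a i)).
rewrite -sum_inv_pow2; apply: ler_sum => i _; rewrite -[X in _ <= X]mul1r.
by apply: ler_wpM2r => //; case/andP: (bit_bounds (a i)).
Qed.

Lemma bits_sum_recl j (a : nat -> bool) :
  \sum_(i < j.+1) (a i)%:R * (2 ^+ i.+1)^-1 =
  ((a 0%N)%:R + \sum_(i < j) (a i.+1)%:R * (2 ^+ i.+1)^-1) / 2 :> R.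
Proof.
rewrite big_ord_recl /= mulrDl; congr (_ + _).
by rewrite mulr_suml; apply: eq_bigr => i _; rewrite exprS invfM; ring.
Qed.

Lemma lead_bit_bits j (a : nat -> bool) :
  lead_bit j.+1 (\sum_(i < j.+1) (a i)%:R * (2 ^+ i.+1)^-1 : R) = (a 0%N)%:R.
Proof.
rewrite bits_sum_recl /lead_bit.
have /andP[r_ge0 r_le] := bits_sum_bounds j (fun i => a i.+1).
set r := \sum_(i < j) _ in r_ge0 r_le *.
have Hp := pow2_gt0 j.
have -> : 2 ^+ j.+1 * (((a 0%N)%:R + r) / 2 - 2^-1) + 1 =
          2 ^+ j * ((a 0%N)%:R + r - 1) + 1 :> R by rewrite exprS; field.
case: (a 0%N) => /=.
  have : 0 <= 2 ^+ j * (1 + r - 1) :> R by apply: mulr_ge0; lra.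
  by move=> ?; rewrite ramp_eq1 //; lra.
rewrite ramp_eq0 //.
have : 2 ^+ j * (0 + r - 1) <= 2 ^+ j * (- (2 ^+ j)^-1) :> R by apply: ler_wpM2l; lra.
by rewrite mulrN mulfV ?gt_eqF //; lra.
Qed.

Lemma bits_sum_shift j (a : nat -> bool) :
  2 * (\sum_(i < j.+1) (a i)%:R * (2 ^+ i.+1)^-1) - (a 0%N)%:R =
  \sum_(i < j) (a i.+1)%:R * (2 ^+ i.+1)^-1 :> R.
Proof. by rewrite bits_sum_recl; field. Qed.

Lemma eq_ind_nat s q : eq_ind s (q%:R : R) = (q == s)%:R.
Proof.
have -> : eq_ind s (q%:R : R) = ramp (q%:Z - s%:Z + 1)%:~R - ramp (q%:Z - s%:Z)%:~R.
  by rewrite /eq_ind intrD intrB.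
rewrite !ramp_int.
have -> : (0 < q%:Z - s%:Z + 1)%R = (s <= q)%N by apply/idP/idP; lia.
have -> : (0 < q%:Z - s%:Z)%R = (s < q)%N by apply/idP/idP; lia.
by case: (ltngtP q s); rewrite ?subrr ?subr0.
Qed.

Lemma extract_bits_val (bf : fn) j s (z : fn) x (a : nat -> bool) (q : nat) :
  z x = \sum_(i < j) (a i)%:R * (2 ^+ i.+1)^-1 -> bf x = q%:R ->
  extract_bits bf j s z x = \sum_(i < j) (if q == (s + i)%N then (a i)%:R else 0).
Proof.
elim: j s z a => [|j IH] s z a Hz Hb /=; first by rewrite big_ord0.
rewrite (IH s.+1 _ (fun i => a i.+1)) //; last by rewrite Hz lead_bit_bits bits_sum_shift.
rewrite Hz lead_bit_bits Hb eq_ind_nat big_ord_recl /= addn0; congr (_ + _).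
  by case: (a 0%N); case: (q == s) => /=; [rewrite ger0_relu | rewrite ler0_relu..]; lra.
by apply: eq_bigr => i _; rewrite /bump /= add1n addSnnS.
Qed.

Fixpoint extract_lip (j : nat) : nat :=
  if j is j'.+1 then (2 ^ j + (2 + 2 ^ j) * extract_lip j')%N else 0%N.

Lemma extract_lip_le j : (extract_lip j <= 2 ^ (j * j))%N.
Proof.
elim: j => [//|j IH] /=.
case: (leqP j 1) => Hj; first by case: j Hj IH => [|[|//]].
have A : (2 + 2 ^ j.+1 <= 2 ^ j.+2)%N.
  by rewrite (expnS 2 j.+1); have := expn_gt0 2 j; rewrite expnS; lia.
have B : ((2 + 2 ^ j.+1) * extract_lip j <= 2 ^ (j.+2 + j * j))%N.
  by rewrite expnD; apply: leq_mul.
have C : (2 ^ (j.+2 + j * j) <= 2 ^ (j.+1 * j.+1).-1)%N by apply: leq_pexp2l => //; nia.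
have D : (2 ^ j.+1 <= 2 ^ (j.+1 * j.+1).-1)%N by apply: leq_pexp2l => //; nia.
have -> : (j.+1 * j.+1 = ((j.+1 * j.+1).-1).+1)%N by nia.
by rewrite (expnS 2 (j.+1 * j.+1).-1); lia.
Qed.

Lemma lip_le_lead_bit k (z : fn) Cz : 0 <= Cz -> lip_le z Cz ->
  lip_le (fun x => lead_bit k (z x)) (2 ^+ k * Cz).
Proof.
move=> HC H; apply/lip_le_ramp/lip_le_shift.
have := lip_le_scale (2 ^+ k) (lip_le_shift (- 2^-1) H).
by rewrite ger0_norm // ltW // pow2_gt0.
Qed.

Lemma lip_le_eq_ind s (bf : fn) Cb : lip_le bf Cb -> lip_le (fun x => eq_ind s (bf x)) (2 * Cb).
Proof.
move=> H; rewrite mulr2n mulrDl mul1r.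
by apply: lip_le_sub; apply/lip_le_ramp; do ?apply: lip_le_shift.
Qed.

Lemma lip_le_extract_bits (bf : fn) Cb j : 0 <= Cb -> lip_le bf Cb ->
  forall s (z : fn) Cz, 0 <= Cz -> lip_le z Cz ->
  lip_le (extract_bits bf j s z) ((extract_lip j)%:R * Cz + (2 * j)%:R * Cb).
Proof.
move=> HCb Hb; elim: j => [|j IH] s z Cz HCz Hz /=.
  by rewrite !mul0r addr0; apply: lip_le_const.
have Hp := pow2_gt0 j.+1.
have Hbit := lip_le_lead_bit j.+1 HCz Hz.
have Hhead : lip_le (fun x => relu (lead_bit j.+1 (z x) + eq_ind s (bf x) - 1))
                    (2 ^+ j.+1 * Cz + 2 * Cb).
  by apply: lip_le_relu; apply: lip_le_shift; apply: lip_le_add Hbit _; apply: lip_le_eq_ind.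
have Hz' : lip_le (fun x => 2 * z x - lead_bit j.+1 (z x)) ((2 + 2 ^+ j.+1) * Cz).
  apply: lip_le_mono (lip_le_sub (lip_le_scale 2 Hz) Hbit).
  by rewrite ger0_norm ?mulrDl.
have HCz' : 0 <= (2 + 2 ^+ j.+1) * Cz by apply: mulr_ge0; lra.
apply: lip_le_mono (lip_le_add Hhead (IH s.+1 _ _ HCz' Hz')).
have -> : ((extract_lip j.+1)%:R : R) = 2 ^+ j.+1 + (2 + 2 ^+ j.+1) * (extract_lip j)%:R.
  by rewrite /= natrD natrM natrD natrX.
have -> : ((2 * j.+1)%:R : R) = 2 + (2 * j)%:R by rewrite !natrM -natr1; ring.
by rewrite le_eqVlt; apply/orP; left; apply/eqP; ring.
Qed.

End BitExtraction.

Section Sums.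
Variable V : zmodType.

Lemma telescope_sumr_ord (g : nat -> V) K : \sum_(m < K) (g m - g m.+1) = g 0%N - g K.
Proof.
rewrite -opprB -(telescope_sumr g (leq0n K)) big_mkord -sumrN.
by apply: eq_bigr => m _; rewrite opprB.
Qed.

Lemma sum_prefix_diff (f : nat -> V) q K : (q < K)%N ->
  \sum_(t < K) (if (t <= q)%N then f t - (if nat_of_ord t is t'.+1 then f t' else 0) else 0)
  = f q.
Proof.
have prefix k : \sum_(t < k) (if (t <= q)%N then f t - (if nat_of_ord t is t'.+1 then f t' else 0)
                                      else 0) = if k is k'.+1 then f (minn k' q) else 0.
  elim: k => [|k IH]; first by rewrite big_ord0.
  rewrite big_ord_recr /= IH; case: k IH => [|k] IH /=; first by rewrite min0n add0r subr0.
  case: (ltnP k q) => H /=; last by rewrite addr0; congr f; lia.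
  by rewrite (minn_idPl H) addrC subrK.
by rewrite prefix; case: K => // K H; congr f; lia.
Qed.

End Sums.

Lemma sum_single_le (R : numDomainType) K (f : 'I_K -> R) M : 0 <= M ->
  (forall i, 0 <= f i <= M) -> (forall i j, f i != 0 -> f j != 0 -> i = j) ->
  \sum_i f i <= M.
Proof.
move=> HM Hf Huniq; case: (boolP [exists i, f i != 0]) => [/existsP [i0 Hi0]|].
  rewrite (bigD1 i0) //= big1 ?addr0; first by case/andP: (Hf i0).
  by move=> j Hj; apply/eqP; apply: contraR Hj => Hj; rewrite (Huniq _ _ Hj Hi0).
rewrite negb_exists => /forallP H.
by rewrite big1 // => i _; move: (H i); rewrite negbK => /eqP.
Qed.

Section Interpolation.
Variables (R : realType) (L W : nat) (theta : nat -> bool).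
Local Notation fn := (R -> R).

Definition blk_len : nat := (L * W)%N.
Definition chunk_len : nat := (blk_len * W)%N.

Definition blk_start c m : R := (c * chunk_len + m * blk_len)%:R.
Definition chunk_zigzag c (x : R) : R := zigzag blk_len W (x - (c * chunk_len)%:R).
Definition after_blk c m (x : R) : R := ramp (x - blk_start c m + 1).
Definition in_blk c m (x : R) : R := after_blk c m x - after_blk c m.+1 x.
Definition after_sub c t (x : R) : R := ramp (chunk_zigzag c x - (t * L)%:R + 1).

Definition bit_index c m k i : nat :=
  (c * chunk_len + m * blk_len + mirror blk_len m (k * L + mirror L k i))%N.
Definition code c m k : R := \sum_(i < L) (theta (bit_index c m k i))%:R * (2 ^+ i.+1)^-1.
Definition code_diff c t m : R := code c m t - (if t is t'.+1 then code c m t' else 0).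
Definition sel_code_diff c t (x : R) : R := \sum_(m < W) code_diff c t m * in_blk c m x.

Definition chunk_code c (x : R) : R :=
  \sum_(t < W) gate (sel_code_diff c t x) (after_sub c t x).
Definition code_fn (x : R) : R := \sum_(c < L) chunk_code c x.

Definition sub_zigzag (v : R) : R := zigzag L W v.
Definition sub_zigzag_end : R := sub_zigzag (zigzag blk_len W chunk_len%:R).
(* The correction term cancels the value left by the zigzag of a chunk already passed. *)
Definition chunk_offset c (x : R) : R :=
  sub_zigzag (chunk_zigzag c x) - sub_zigzag_end * after_blk c W x.
Definition offset_fn (x : R) : R := \sum_(c < L) chunk_offset c x.

Definition interp : fn := extract_bits offset_fn L 0 code_fn.

Definition zigzag_layer c : seq fn :=
  clamp_pairs (blk_len.-1)%:R (fun m x => x - (c * chunk_len)%:R - (m * blk_len)%:R) W.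

Definition indicator_layer c (accY accB : fn) : seq fn :=
  relu_pair id ++ clamp_pairs 1 (fun m x => x - blk_start c m + 1) W.+1 ++
  clamp_pairs 1 (fun t x => chunk_zigzag c x - (t * L)%:R + 1) W ++
  clamp_pairs (L.-1)%:R (fun k x => chunk_zigzag c x - (k * L)%:R) W ++
  relu_pair accY ++ relu_pair accB.

Definition gating_layer c (accY accB : fn) : seq fn :=
  map (fun t x => relu (sel_code_diff c t x + 2 * after_sub c t x - 1)) (iota 0 W) ++
  relu_pair (fun x => accY x - \sum_(t < W) after_sub c t x) ++ relu_pair id ++
  zigzag_layer c.+1 ++ relu_pair (fun x => accB x + chunk_offset c x).

Lemma relu_layer_zigzag (F : seq fn) c : affine_in F id -> relu_layer F (zigzag_layer c).
Proof. by move=> Hx; apply: relu_layer_clamp_pairs => m _; do 2 apply: affine_in_shift. Qed.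

Lemma affine_in_chunk_zigzag c : affine_in (zigzag_layer c) (chunk_zigzag c).
Proof.
apply: (affine_in_ext (h := fun x => \sum_(m < W) (-1) ^+ m *
  clamp (blk_len.-1)%:R (x - (c * chunk_len)%:R - (m * blk_len)%:R))) => //.
apply: affine_in_sum => m; apply: affine_in_scale.
exact: affine_in_clamp_pairs.
Qed.

Section Layers.
Variables (c : nat) (accY accB : fn).
Let P := indicator_layer c accY accB.
Let Q := gating_layer c accY accB.

Lemma size_indicator_layer : size P = (6 * W + 8)%N.
Proof. by rewrite /P /indicator_layer !size_cat !size_map !size_iota /=; lia. Qed.

Lemma size_gating_layer : size Q = (3 * W + 6)%N.
Proof.
by rewrite /Q /gating_layer /zigzag_layer !size_cat !size_map !size_iota /=; lia.
Qed.

Lemma relu_layer_indicator (F : seq fn) : affine_in F id -> affine_in F (chunk_zigzag c) ->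
  affine_in F accY -> affine_in F accB -> relu_layer F P.
Proof.
move=> Hx HT HY HB; rewrite /P /indicator_layer.
apply: relu_layer_cat; first exact: relu_layer_pair.
apply: relu_layer_cat; first by apply: relu_layer_clamp_pairs => m _; do 2 apply: affine_in_shift.
apply: relu_layer_cat; first by apply: relu_layer_clamp_pairs => t _; do 2 apply: affine_in_shift.
apply: relu_layer_cat; first by apply: relu_layer_clamp_pairs => k _; apply: affine_in_shift.
by apply: relu_layer_cat; apply: relu_layer_pair.
Qed.

Lemma indicator_id : affine_in P id.
Proof. by apply: affine_in_catl; apply: affine_in_relu_pair. Qed.

Lemma indicator_after_blk m : (m < W.+1)%N -> affine_in P (after_blk c m).
Proof.
by move=> Hm; apply: affine_in_catr; apply: affine_in_catl; apply: affine_in_clamp_pairs.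
Qed.

Lemma indicator_after_sub t : (t < W)%N -> affine_in P (after_sub c t).
Proof.
by move=> Ht; do 2 apply: affine_in_catr; apply: affine_in_catl; apply: affine_in_clamp_pairs.
Qed.

Lemma indicator_sub_zigzag : affine_in P (fun x => sub_zigzag (chunk_zigzag c x)).
Proof.
do 3 apply: affine_in_catr; apply: affine_in_catl.
apply: (affine_in_ext (h := fun x => \sum_(k < W) (-1) ^+ k *
  clamp (L.-1)%:R (chunk_zigzag c x - (k * L)%:R))) => //.
by apply: affine_in_sum => k; apply: affine_in_scale; apply: affine_in_clamp_pairs.
Qed.

Lemma indicator_accY : affine_in P accY.
Proof. by do 4 apply: affine_in_catr; apply: affine_in_catl; apply: affine_in_relu_pair. Qed.

Lemma indicator_accB : affine_in P accB.
Proof. by do 5 apply: affine_in_catr; apply: affine_in_relu_pair. Qed.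

Lemma indicator_gate_arg t : (t < W)%N ->
  affine_in P (fun x => sel_code_diff c t x + 2 * after_sub c t x - 1).
Proof.
move=> Ht; apply: affine_in_shift; apply: affine_in_add.
  apply: affine_in_sum => m; apply: affine_in_scale.
  by apply: affine_in_sub; apply: indicator_after_blk; have := ltn_ord m; lia.
by apply: affine_in_scale; apply: indicator_after_sub.
Qed.

Lemma relu_layer_gating : relu_layer P Q.
Proof.
rewrite /Q /gating_layer.
apply: relu_layer_cat; first by apply: relu_layer_map => t Ht; apply: indicator_gate_arg.
apply: relu_layer_cat.
  apply: relu_layer_pair; apply: affine_in_sub indicator_accY _.
  by apply: affine_in_sum => t; apply: indicator_after_sub (ltn_ord t).
apply: relu_layer_cat; first exact/relu_layer_pair/indicator_id.
apply: relu_layer_cat; first exact/relu_layer_zigzag/indicator_id.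
apply: relu_layer_pair; apply: affine_in_add indicator_accB _.
by apply: affine_in_sub indicator_sub_zigzag _; apply/affine_in_scale/indicator_after_blk.
Qed.

Lemma gating_id : affine_in Q id.
Proof. by do 2 apply: affine_in_catr; apply: affine_in_catl; apply: affine_in_relu_pair. Qed.

Lemma gating_chunk_zigzag : affine_in Q (chunk_zigzag c.+1).
Proof.
by do 3 apply: affine_in_catr; apply: affine_in_catl; apply: affine_in_chunk_zigzag.
Qed.

Lemma gating_accB : affine_in Q (fun x => accB x + chunk_offset c x).
Proof. by do 4 apply: affine_in_catr; apply: affine_in_relu_pair. Qed.

Lemma gating_accY : affine_in Q (fun x => accY x + chunk_code c x).
Proof.
apply: (affine_in_ext (h := fun x => (accY x - \sum_(t < W) after_sub c t x) +
   \sum_(t < W) relu (sel_code_diff c t x + 2 * after_sub c t x - 1))).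
  by move=> x; rewrite /chunk_code /gate [X in _ = _ + X]sumrB; ring.
apply: affine_in_add.
  by apply: affine_in_catr; apply: affine_in_catl; apply: affine_in_relu_pair.
apply: affine_in_sum => t; apply: affine_in_catl.
exact: (affine_in_map (fun t x => relu (sel_code_diff c t x + 2 * after_sub c t x - 1))).
Qed.

End Layers.

Lemma realizable_chunks w : (6 * W + 8 <= w)%N -> (13 <= w)%N ->
  forall k c (F : seq fn) accY accB,
  affine_in F id -> affine_in F (chunk_zigzag c) -> affine_in F accY -> affine_in F accB ->
  realizable w F (2 * k + L + 1)
    (extract_bits (fun x => accB x + \sum_(i < k) chunk_offset (c + i) x) L 0
                  (fun x => accY x + \sum_(i < k) chunk_code (c + i) x)).
Proof.
move=> Hw1 Hw2; elim=> [|k IH] c F accY accB Hx HT HY HB.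
  rewrite muln0 add0n addn1.
  apply: realizable_ext (realizable_extract_bits L Hw2 0 HY HB (affine_in_const F 0)
                          (affine_in_const F (-1))) => x.
  rewrite ler0_relu ?add0r ?addr0; last by lra.
  by apply: extract_bits_ext => y; rewrite big_ord0 addr0.
rewrite (_ : 2 * k.+1 + L + 1 = (2 * k + L + 1).+2)%N; last by lia.
exists (indicator_layer c accY accB); split; first by rewrite size_indicator_layer.
  exact: relu_layer_indicator.
exists (gating_layer c accY accB); split; first by rewrite size_gating_layer; lia.
  exact: relu_layer_gating.
apply: realizable_ext (IH c.+1 _ _ _ (gating_id c accY accB)
  (gating_chunk_zigzag c accY accB) (gating_accY c accY accB)
  (gating_accB c accY accB)) => x.
have shift_sum (f : nat -> R -> R) y :
    \sum_(i < k) f (c + lift ord0 i)%N y = \sum_(i < k) f (c.+1 + i)%N y.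
  by apply: eq_bigr => i _; rewrite /= addSnnS.
apply: extract_bits_ext => y; rewrite big_ord_recl addn0.
  by rewrite (shift_sum chunk_offset) /chunk_offset; ring.
by rewrite (shift_sum chunk_code) addrA.
Qed.

Lemma realizable_interp : (2 <= W)%N -> realizable (8 * W + 4) [:: id] (3 * L + 2) interp.
Proof.
move=> HW; rewrite (_ : 3 * L + 2 = (2 * L + L + 1).+1)%N; last by lia.
exists (relu_pair id ++ zigzag_layer 0); split.
- by rewrite size_cat /zigzag_layer size_clamp_pairs /=; lia.
- apply: relu_layer_cat; first by apply: relu_layer_pair; apply: affine_in_head.
  by apply: relu_layer_zigzag; apply: affine_in_head.
apply: realizable_ext (realizable_chunks _ _ L
  (affine_in_catl _ (affine_in_relu_pair id)) (affine_in_catr _ (affine_in_chunk_zigzag 0))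
  (affine_in_const _ 0) (affine_in_const _ 0)) => [x||]; try lia.
by apply: extract_bits_ext => y; rewrite add0r; apply: eq_bigr.
Qed.


Hypotheses (L_gt0 : (0 < L)%N) (W_gt0 : (0 < W)%N).

Lemma blk_len_gt0 : (0 < blk_len)%N.
Proof. by rewrite muln_gt0 L_gt0. Qed.

Lemma chunk_lenE : chunk_len = (W * blk_len)%N.
Proof. by rewrite /chunk_len mulnC. Qed.

Lemma chunk_len_gt0 : (0 < chunk_len)%N.
Proof. by rewrite muln_gt0 blk_len_gt0. Qed.

Definition chunk_zigzagn c (n : int) : nat :=
  if (n - (c * chunk_len)%:Z <= 0)%R then 0%N
  else zigzagn blk_len W `|(n - (c * chunk_len)%:Z)%R|%N.

Lemma chunk_zigzag_int c (n : int) : chunk_zigzag c n%:~R = (chunk_zigzagn c n)%:R.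
Proof.
by rewrite /chunk_zigzag /chunk_zigzagn -(zigzag_int _ _ _ blk_len_gt0) intrB.
Qed.

Lemma chunk_zigzagn_le c n : (chunk_zigzagn c n <= blk_len.-1)%N.
Proof. by rewrite /chunk_zigzagn; case: ifP => _ //; exact: zigzagn_le W blk_len_gt0 _. Qed.

Lemma chunk_zigzagn_walk c (n : int) :
  [/\ (chunk_zigzagn c (n + 1) <= (chunk_zigzagn c n).+1)%N,
      (chunk_zigzagn c n <= (chunk_zigzagn c (n + 1)).+1)%N &
      chunk_zigzagn c (n + 1) != chunk_zigzagn c n -> exists k : nat,
        [/\ (n - (c * chunk_len)%:Z = k)%R, (k.+1 < W * blk_len)%N & (k.+1 %% blk_len != 0)%N]].
Proof.
rewrite /chunk_zigzagn; move: (c * chunk_len)%N => z.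
case: (lerP (n - z%:Z) (-1)) => Hu.
  by rewrite !ifT; [split; rewrite ?eqxx | lia | lia].
have [k Ek] : exists k : nat, (n - z%:Z)%R = k by exists `|(n - z%:Z)%R|%N; lia.
have -> : (n + 1 - z%:Z)%R = k.+1 by lia.
rewrite Ek (_ : (k.+1%:Z <= 0)%R = false); last by apply/negP; lia.
rewrite (_ : (if _ then _ else _) = zigzagn blk_len W k); last first.
  by case: ifP => // Hk; rewrite (_ : k = 0%N) ?(zigzagn_0 W blk_len_gt0) //; lia.
have [W1 W2 W3] := zigzagn_walk W blk_len_gt0 k.
by split => // /W3 [H1 H2]; exists k.
Qed.

Lemma after_blk_int c m (n : int) :
  after_blk c m n%:~R = if ((c * chunk_len + m * blk_len)%:Z <= n)%R then 1 else 0.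
Proof.
rewrite /after_blk /blk_start.
rewrite (_ : _ + 1 = (n - (c * chunk_len + m * blk_len)%:Z + 1)%:~R); last by rewrite intrD intrB.
by rewrite ramp_int; congr (if _ then _ else _); apply/idP/idP; lia.
Qed.

Lemma after_sub_int c t (n : int) :
  after_sub c t n%:~R = if (t * L <= chunk_zigzagn c n)%N then 1 else 0.
Proof.
rewrite /after_sub chunk_zigzag_int.
rewrite (_ : _ + 1 = ((chunk_zigzagn c n)%:Z - (t * L)%:Z + 1)%:~R); last by rewrite intrD intrB.
by rewrite ramp_int; congr (if _ then _ else _); apply/idP/idP; lia.
Qed.

Lemma int_steps_chunk_zigzag c : int_steps (chunk_zigzag c).
Proof.
move=> n; exists (chunk_zigzagn c n), (chunk_zigzagn c (n + 1)); rewrite !chunk_zigzag_int.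
by have [H1 H2 _] := chunk_zigzagn_walk c n; split => //; lia.
Qed.

Lemma cell_affine_chunk_zigzag c : cell_affine (chunk_zigzag c).
Proof.
apply: (cell_affine_ext (h := fun x => zigzag blk_len W (x + (- (c * chunk_len)%:Z)%:~R))).
  by move=> x; rewrite intrN.
exact: (cell_affine_zigzag _ _ _ (@cell_affine_id R) (@int_steps_id R)).
Qed.

Lemma cell_affine_after_blk c m : cell_affine (after_blk c m).
Proof.
apply: (cell_affine_ext
  (h := fun x => clamp 1%:R (x + (1 - (c * chunk_len + m * blk_len)%:Z)%:~R))).
  by move=> x; rewrite /after_blk /ramp /blk_start intrB -!pmulrn; congr clamp; ring.
exact: (cell_affine_clamp _ _ (@cell_affine_id R) (@int_steps_id R)).
Qed.

Lemma cell_affine_after_sub c t : cell_affine (after_sub c t).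
Proof.
apply: (cell_affine_ext (h := fun x => clamp 1%:R (chunk_zigzag c x + (1 - (t * L)%:Z)%:~R))).
  by move=> x; rewrite /after_sub /ramp intrB -!pmulrn; congr clamp; ring.
exact: (cell_affine_clamp _ _ (cell_affine_chunk_zigzag c) (int_steps_chunk_zigzag c)).
Qed.

Lemma cell_affine_sel_code_diff c t : cell_affine (sel_code_diff c t).
Proof.
apply: cell_affine_sum => m; apply: cell_affine_scale.
by apply: cell_affine_sub; apply: cell_affine_after_blk.
Qed.

Lemma cell_affine_offset_fn : cell_affine offset_fn.
Proof.
apply: cell_affine_sum => c; apply: cell_affine_sub; last first.
  by apply: cell_affine_scale; apply: cell_affine_after_blk.
apply: (cell_affine_ext (h := fun x => zigzag L W (chunk_zigzag c x + 0%:~R))).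
  by move=> x; rewrite addr0.
exact: (cell_affine_zigzag _ _ _ (cell_affine_chunk_zigzag c) (int_steps_chunk_zigzag c)).
Qed.

Lemma code_bounds c m k : 0 <= code c m k <= 1.
Proof.
have /andP[lo hi] := bits_sum_bounds R L (fun i => theta (bit_index c m k i)).
rewrite -/(code c m k) in lo hi.
have : 0 < (2 ^+ L : R)^-1 by rewrite invr_gt0 pow2_gt0.
by move=> ?; apply/andP; split; lra.
Qed.

Lemma code_diff_bounds c t m : -1 <= code_diff c t m <= 1.
Proof.
have /andP[a0 a1] := code_bounds c m t.
rewrite /code_diff; case: t a0 a1 => [|t] a0 a1; first by apply/andP; split; lra.
by have /andP[? ?] := code_bounds c m t; apply/andP; split; lra.
Qed.

Lemma after_blk_bounds c m x : 0 <= after_blk c m x <= 1.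
Proof. by rewrite ramp_ge0 ramp_le1. Qed.

Lemma in_blk_ge0 c m x : 0 <= in_blk c m x.
Proof.
rewrite subr_ge0; apply: ramp_le; rewrite lerD2r lerD2l lerN2 ler_nat; nia.
Qed.

Lemma sum_in_blk c x : \sum_(m < W) in_blk c m x = after_blk c 0 x - after_blk c W x.
Proof. exact: (telescope_sumr_ord (fun m => after_blk c m x)). Qed.

Lemma after_blk_W c x : after_blk c W x = after_blk c.+1 0 x.
Proof. by rewrite /after_blk /blk_start mulSn chunk_lenE; congr (ramp (_ - _%:R + _)); ring. Qed.

Lemma sum_in_blk_le1 x : \sum_(c < L) \sum_(m < W) in_blk c m x <= 1.
Proof.
under eq_bigr => c _ do rewrite sum_in_blk after_blk_W.
rewrite (telescope_sumr_ord (fun c => after_blk c 0 x)).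
by have /andP[? ?] := after_blk_bounds 0 0 x; have /andP[? ?] := after_blk_bounds L 0 x; lra.
Qed.

Lemma sel_code_diff_bounds c t x : -1 <= sel_code_diff c t x <= 1.
Proof.
have Hs : \sum_(m < W) in_blk c m x <= 1.
  by rewrite sum_in_blk; have := after_blk_bounds c 0 x; have := after_blk_bounds c W x;
     move=> /andP[? ?] /andP[? ?]; lra.
apply/andP; split.
  apply: (@le_trans _ _ (- \sum_(m < W) in_blk c m x)); first by lra.
  rewrite -sumrN; apply: ler_sum => m _; rewrite -mulN1r.
  by apply: ler_wpM2r; [exact: in_blk_ge0 | case/andP: (code_diff_bounds c t m)].
apply: le_trans Hs; apply: ler_sum => m _; rewrite -[X in _ <= X]mul1r.
by apply: ler_wpM2r; [exact: in_blk_ge0 | case/andP: (code_diff_bounds c t m)].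
Qed.

Lemma chunk_code_int c (n : int) :
  chunk_code c n%:~R = \sum_(m < W) in_blk c m n%:~R * code c m (chunk_zigzagn c n %/ L).
Proof.
set q := (chunk_zigzagn c n %/ L)%N.
have Hq : (q < W)%N.
  rewrite ltn_divLR //; have := chunk_zigzagn_le c n; have := blk_len_gt0.
  by rewrite /blk_len; nia.
rewrite /chunk_code (eq_bigr (fun t : 'I_W => (if (t <= q)%N then 1 else 0) *
                                              sel_code_diff c t n%:~R)) => [|t _]; last first.
  rewrite after_sub_int leq_divRL //; have Hb := sel_code_diff_bounds c t n%:~R.
  by case: ifP => _; [apply: (gate_bit true Hb) | apply: (gate_bit false Hb)].
under eq_bigr => t _ do rewrite mulr_sumr.
rewrite exchange_big /=; apply: eq_bigr => m _.
rewrite -(sum_prefix_diff (code c m) Hq) mulr_sumr; apply: eq_bigr => t _.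
by rewrite /code_diff; case: ifP => _; rewrite ?mul1r ?mul0r ?mulr0 // mulrC.
Qed.

Lemma code_fn_int (n : int) : code_fn n%:~R =
  \sum_(c < L) \sum_(m < W) in_blk c m n%:~R * code c m (chunk_zigzagn c n %/ L).
Proof. by apply: eq_bigr => c _; rewrite chunk_code_int. Qed.

Lemma code_fn_bounds (n : int) : 0 <= code_fn n%:~R <= 1.
Proof.
rewrite code_fn_int; apply/andP; split.
  apply: sumr_ge0 => c _; apply: sumr_ge0 => m _; apply: mulr_ge0; first exact: in_blk_ge0.
  by case/andP: (code_bounds c m (chunk_zigzagn c n %/ L)).
apply: le_trans (sum_in_blk_le1 n%:~R); apply: ler_sum => c _; apply: ler_sum => m _.
rewrite -[X in _ <= X]mulr1; apply: ler_wpM2l; first exact: in_blk_ge0.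
by case/andP: (code_bounds c m (chunk_zigzagn c n %/ L)).
Qed.

(* A one-step move of the zigzag crosses at most one threshold [t * L]. *)
Lemma sum_after_sub_jump_chunk (n : int) c :
  chunk_zigzagn c (n + 1) != chunk_zigzagn c n ->
  \sum_(t < W) `|after_sub c t (n + 1)%:~R - after_sub c t n%:~R| <= 1.
Proof.
move=> Nc; have [W1 W2 _] := chunk_zigzagn_walk c n.
apply: sum_single_le; first by lra.
  move=> t; apply/andP; split; first by apply: normr_ge0.
  by rewrite !after_sub_int; do 2 case: ifP => _;
    rewrite ?subrr ?normr0 ?subr0 ?sub0r ?normrN ?normr1 ?ler01.
move=> t1 t2; rewrite !after_sub_int.
case: ifP => A1; case: ifP => B1; rewrite ?subrr ?normr0 ?eqxx // => _;
case: ifP => A2; case: ifP => B2; rewrite ?subrr ?normr0 ?eqxx // => _;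
by apply: val_inj => /=; nia.
Qed.

(* Distinct chunk zigzags move at distinct integers. *)
Lemma sum_after_sub_jump_le1 (n : int) :
  \sum_(c < L) \sum_(t < W) `|after_sub c t (n + 1)%:~R - after_sub c t n%:~R| <= 1.
Proof.
have moves c : \sum_(t < W) `|after_sub c t (n + 1)%:~R - after_sub c t n%:~R| != 0 ->
    chunk_zigzagn c (n + 1) != chunk_zigzagn c n.
  apply: contra => /eqP Ec; apply/eqP.
  by rewrite big1 // => t _; rewrite !after_sub_int Ec subrr normr0.
apply: sum_single_le; first by lra.
  move=> c; apply/andP; split; first by apply: sumr_ge0 => t _; apply: normr_ge0.
  have [->|/moves] := eqVneq (\sum_(t < W) `|after_sub c t (n + 1)%:~R - after_sub c t n%:~R|) 0.
    exact: ler01.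
  exact: sum_after_sub_jump_chunk.
have step c : \sum_(t < W) `|after_sub c t (n + 1)%:~R - after_sub c t n%:~R| != 0 ->
    exists k : nat, [/\ (n - (c * chunk_len)%:Z = k)%R, (k.+1 < W * blk_len)%N
                       & (k.+1 %% blk_len != 0)%N].
  by move=> /moves; have [_ _ W3] := chunk_zigzagn_walk c n; exact: W3.
move=> c1 c2 /step [k1 [E1 F1 _]] /step [k2 [E2 F2 _]].
apply: val_inj => /=; move: F1 F2 E1 E2; rewrite -chunk_lenE.
by move: chunk_len chunk_len_gt0 => Z HZ; nia.
Qed.

(* A block boundary is a multiple of [blk_len], where no chunk zigzag moves. *)
Lemma after_blk_jump_flat (n : int) c0 m0 :
  after_blk c0 m0 (n + 1)%:~R != after_blk c0 m0 n%:~R ->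
  forall c, chunk_zigzagn c (n + 1) = chunk_zigzagn c n.
Proof.
have HRL := blk_len_gt0.
rewrite !after_blk_int => Hl.
have En : (n + 1 = (c0 * chunk_len + m0 * blk_len)%:Z)%R.
  by move: Hl; do 2 case: ifP => //; rewrite ?eqxx //; lia.
move=> c; apply/eqP; apply: contraT => Nc.
have [_ _ W3] := chunk_zigzagn_walk c n.
have [k [Ek _ Hk]] := W3 Nc.
have E2 : (c * W * blk_len + k.+1 = (c0 * W + m0) * blk_len)%N.
  have : (k.+1%:Z + (c * chunk_len)%:Z = (c0 * chunk_len + m0 * blk_len)%:Z)%R by lia.
  by rewrite chunk_lenE; lia.
by move: Hk; rewrite -(modnMDl (c * W) k.+1 blk_len) E2 modnMl.
Qed.

Lemma code_fn_affine_on_cell (n : int) :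
  (forall c t, after_sub c t (n + 1)%:~R = after_sub c t n%:~R) ->
  forall s, 0 <= s -> s <= 1 ->
  code_fn (n%:~R + s) = code_fn n%:~R + s * (code_fn (n + 1)%:~R - code_fn n%:~R).
Proof.
move=> Hflat.
pose Y x := \sum_(c < L) \sum_(t < W) after_sub c t n%:~R * sel_code_diff c t x.
have EY s : 0 <= s -> s <= 1 -> code_fn (n%:~R + s) = Y (n%:~R + s).
  move=> S1 S2; apply: eq_bigr => c _; apply: eq_bigr => t _.
  rewrite (cell_affine_flat (cell_affine_after_sub c t) (Hflat c t)) // after_sub_int.
  have Hb := sel_code_diff_bounds c t (n%:~R + s).
  by case: ifP => _; [apply: (gate_bit true Hb) | apply: (gate_bit false Hb)].
have cell_Y : cell_affine Y.
  apply: cell_affine_sum => c; apply: cell_affine_sum => t.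
  by apply: cell_affine_scale; apply: cell_affine_sel_code_diff.
have EY0 : code_fn n%:~R = Y n%:~R by have := EY 0 (lexx _) ler01; rewrite addr0.
have EY1 : code_fn (n + 1)%:~R = Y (n + 1)%:~R by rewrite intrD; apply: EY; lra.
by move=> s S1 S2; rewrite EY // cell_Y // EY0 EY1.
Qed.

Lemma code_fn_dist_blk_jump (n : int) c0 m0 :
  after_blk c0 m0 (n + 1)%:~R != after_blk c0 m0 n%:~R ->
  forall s s', 0 <= s -> s <= 1 -> 0 <= s' -> s' <= 1 ->
  `|code_fn (n%:~R + s) - code_fn (n%:~R + s')| <= `|s - s'|.
Proof.
move=> Hjump s s' S1 S2 S3 S4.
have Hflat c t : after_sub c t (n + 1)%:~R = after_sub c t n%:~R.
  by rewrite !after_sub_int (after_blk_jump_flat Hjump).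
rewrite !(code_fn_affine_on_cell Hflat) //.
set d := code_fn (n + 1)%:~R - code_fn n%:~R.
have -> : code_fn n%:~R + s * d - (code_fn n%:~R + s' * d) = (s - s') * d by ring.
rewrite normrM -[X in _ <= X]mulr1; apply: ler_wpM2l => //.
have /andP[? ?] := code_fn_bounds n; have /andP[? ?] := code_fn_bounds (n + 1).
by rewrite /d ler_norml; apply/andP; split; lra.
Qed.

Lemma code_fn_dist_no_blk_jump (n : int) :
  (forall (c : 'I_L) (m : 'I_W.+1), after_blk c m (n + 1)%:~R = after_blk c m n%:~R) ->
  forall s s', 0 <= s -> s <= 1 -> 0 <= s' -> s' <= 1 ->
  `|code_fn (n%:~R + s) - code_fn (n%:~R + s')| <= `|s - s'|.
Proof.
move=> Hflat s s' S1 S2 S3 S4.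
have Hsel (c : 'I_L) t u :
    0 <= u -> u <= 1 -> sel_code_diff c t (n%:~R + u) = sel_code_diff c t n%:~R.
  move=> U1 U2; apply: eq_bigr => m _; rewrite /in_blk.
  by rewrite !(cell_affine_flat (cell_affine_after_blk _ _) (Hflat c (widen_ord _ m)))
             ?(cell_affine_flat (cell_affine_after_blk _ _) (Hflat c (lift ord0 m))).
rewrite /code_fn -sumrB; apply: le_trans (ler_norm_sum _ _ _) _.
apply: (@le_trans _ _ (\sum_(c < L) \sum_(t < W)
          `|s - s'| * `|after_sub c t (n + 1)%:~R - after_sub c t n%:~R|)).
  apply: ler_sum => c _; rewrite /chunk_code -sumrB.
  apply: le_trans (ler_norm_sum _ _ _) _; apply: ler_sum => t _.
  rewrite !Hsel //; apply: le_trans (gate_dist_le _ _ _) _.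
  rewrite !(cell_affine_after_sub c t n) //.
  set d := after_sub c t (n + 1)%:~R - after_sub c t n%:~R.
  have -> : after_sub c t n%:~R + s * d - (after_sub c t n%:~R + s' * d) = (s - s') * d by ring.
  by rewrite normrM.
under eq_bigr => c _ do rewrite -mulr_sumr.
rewrite -mulr_sumr -[X in _ <= X]mulr1; apply: ler_wpM2l => //.
exact: sum_after_sub_jump_le1.
Qed.

(* On a cell containing a block boundary no sub-block indicator moves; on any other cell
   the gated differences are constant and at most one gate input moves. *)
Lemma cell_lip_code_fn : cell_lip code_fn 1.
Proof.
move=> n s s' S1 S2 S3 S4; rewrite mul1r.
case: (boolP [exists c : 'I_L, exists m : 'I_W.+1,
                after_blk c m (n + 1)%:~R != after_blk c m n%:~R]).
  by case/existsP => c /existsP [m Hjump]; apply: (code_fn_dist_blk_jump Hjump).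
rewrite negb_exists => /forallP Hnone; apply: code_fn_dist_no_blk_jump => // c m.
by apply/eqP; move: (Hnone c); rewrite negb_exists => /forallP /(_ m); rewrite negbK.
Qed.

Lemma chunk_offset_int c (n : int) :
  chunk_offset c n%:~R = if ((c * chunk_len)%:Z <= n)%R && (n < (c.+1 * chunk_len)%:Z)%R
                         then (zigzagn L W (chunk_zigzagn c n))%:R else 0.
Proof.
have HRL := blk_len_gt0; have HCL := chunk_len_gt0.
rewrite /chunk_offset /sub_zigzag_end /sub_zigzag chunk_zigzag_int !zigzag_nat //.
rewrite after_blk_W after_blk_int mul0n addn0.
case: (lerP (c.+1 * chunk_len)%:Z n) => Hn; rewrite mulSn in Hn.
  rewrite andbF mulr1 /chunk_zigzagn ifF; last by apply/negbTE; rewrite -ltNge; lia.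
  have sat m : (chunk_len <= m)%N -> zigzagn blk_len W m = zigzagn blk_len W chunk_len.
    by move=> H; rewrite !zigzagn_sat // -chunk_lenE.
  by rewrite sat ?subrr //; lia.
rewrite andbT mulr0 subr0; case: ifP => // Hc.
by rewrite /chunk_zigzagn ifT ?zigzagn_0 //; lia.
Qed.

Lemma offset_fn_bounds (n : int) : 0 <= offset_fn n%:~R <= (L.-1)%:R.
Proof.
have HCL := chunk_len_gt0.
apply/andP; split.
  by apply: sumr_ge0 => c _; rewrite chunk_offset_int; case: ifP => _; rewrite ?ler0n.
apply: sum_single_le; first by rewrite ler0n.
  move=> c; rewrite chunk_offset_int; case: ifP => _; rewrite ?lexx ?ler0n //.
  by rewrite ler_nat zigzagn_le.
move=> c1 c2; rewrite !chunk_offset_int.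
case: ifP => [/andP [A1 A2]|]; last by rewrite eqxx.
case: ifP => [/andP [B1 B2]|]; last by rewrite eqxx.
move=> _ _; apply: val_inj => /=.
by move: A1 A2 B1 B2; rewrite !mulSn; move: chunk_len HCL => Z HZ; nia.
Qed.

Lemma cell_lip_offset_fn : cell_lip offset_fn L%:R.
Proof.
apply: (cell_affine_lip cell_affine_offset_fn) => n.
have /andP[? ?] := offset_fn_bounds n; have /andP[? ?] := offset_fn_bounds (n + 1).
have : ((L.-1)%:R : R) <= L%:R by rewrite ler_nat; lia.
by move=> ?; rewrite ler_norml; apply/andP; split; lra.
Qed.

Section Values.
Variables (c0 m0 p : nat).
Hypotheses (c0_lt : (c0 < L)%N) (m0_lt : (m0 < W)%N) (p_lt : (p < blk_len)%N).
Let i : nat := (c0 * chunk_len + m0 * blk_len + p)%N.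

Lemma chunk_zigzagn_at : chunk_zigzagn c0 i = mirror blk_len m0 p.
Proof.
have HRL := blk_len_gt0.
rewrite /chunk_zigzagn (_ : (i%:Z - (c0 * chunk_len)%:Z)%R = (m0 * blk_len + p)%N); last first.
  by rewrite /i; lia.
case: ifP => H; last by rewrite zigzagn_block.
by have [-> ->] : m0 = 0%N /\ p = 0%N by nia.
Qed.

Lemma offset_fn_at : offset_fn i%:R = (zigzagn L W (mirror blk_len m0 p))%:R.
Proof.
have HCL := chunk_len_gt0; have HRL := blk_len_gt0.
rewrite [i%:R]pmulrn /offset_fn (bigD1 (Ordinal c0_lt)) //= big1 ?addr0.
  rewrite chunk_offset_int ifT ?chunk_zigzagn_at //.
  by apply/andP; split; rewrite /i; [lia | rewrite mulSn chunk_lenE; nia].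
move=> c Hc; rewrite chunk_offset_int ifF //.
have Hc' : (c : nat) != c0 by apply: contra Hc => /eqP E; apply/eqP/val_inj.
apply/negbTE; rewrite negb_and -!ltNge -leNgt /i.
case: (ltnP c c0) => H.
  apply/orP; right; have : (c.+1 * chunk_len <= c0 * chunk_len)%N by rewrite leq_pmul2r.
  by rewrite mulSn; lia.
apply/orP; left; have : (c0.+1 * chunk_len <= c * chunk_len)%N by rewrite leq_pmul2r //; lia.
by rewrite mulSn chunk_lenE; nia.
Qed.

Lemma in_blk_at c m : (m < W)%N ->
  in_blk c m i%:R = if (c == c0) && (m == m0) then 1 else 0.
Proof.
move=> Hm; have HRL := blk_len_gt0.
rewrite [i%:R]pmulrn /in_blk !after_blk_int !lez_nat.
have E k : (c * chunk_len + k * blk_len <= i)%N = (c * W + k <= c0 * W + m0)%N.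
  apply/idP/idP; rewrite /i chunk_lenE => H; nia.
rewrite !E.
case: (boolP ((c == c0) && (m == m0))) => [/andP [/eqP -> /eqP ->]|H].
  by rewrite leqnn ifF ?subr0 //; apply/negbTE; lia.
case: (leqP (c * W + m) (c0 * W + m0)) => H1; last by rewrite ifF ?subrr //; lia.
rewrite ifT ?subrr //.
suff : (c * W + m != c0 * W + m0)%N by lia.
apply: contra H => /eqP E1.
have [E2 E3] := divn_modn_block c Hm; have [E4 E5] := divn_modn_block c0 m0_lt.
by rewrite E1 in E2 E3; rewrite -E2 -E3 E4 E5 !eqxx.
Qed.

Lemma code_fn_at : code_fn i%:R = code c0 m0 (mirror blk_len m0 p %/ L).
Proof.
rewrite [i%:R]pmulrn code_fn_int -pmulrn (bigD1 (Ordinal c0_lt)) //=.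
rewrite [X in _ + X]big1 ?addr0; last first.
  move=> c Hc; apply: big1 => m _; rewrite in_blk_at // ifF ?mul0r //.
  apply/negbTE; rewrite negb_and; apply/orP; left.
  by apply: contra Hc => /eqP E; apply/eqP/val_inj.
rewrite (bigD1 (Ordinal m0_lt)) //= [X in _ + X]big1 ?addr0; last first.
  move=> m Hm; rewrite in_blk_at // eqxx /= ifF ?mul0r //.
  by apply/negbTE; apply: contra Hm => /eqP E; apply/eqP/val_inj.
by rewrite in_blk_at // !eqxx mul1r chunk_zigzagn_at.
Qed.

End Values.

Lemma index_decomp i : (i < L * chunk_len)%N -> exists c0 m0 p,
  [/\ (c0 < L)%N, (m0 < W)%N, (p < blk_len)%N & (i = c0 * chunk_len + m0 * blk_len + p)%N].
Proof.
move=> Hi; have HCL := chunk_len_gt0; have HRL := blk_len_gt0.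
exists (i %/ chunk_len)%N, (i %% chunk_len %/ blk_len)%N, (i %% chunk_len %% blk_len)%N; split.
- by rewrite ltn_divLR.
- by rewrite ltn_divLR // -chunk_lenE ltn_pmod.
- exact: ltn_pmod.
by rewrite -addnA -divn_eq -divn_eq.
Qed.

Lemma interp_at i : (i < L * chunk_len)%N -> interp i%:R = (theta i)%:R.
Proof.
move=> /index_decomp [c0 [m0 [p [Hc Hm Hp ->]]]].
set T := mirror blk_len m0 p; have HT : (T < blk_len)%N by apply: mirror_lt.
set k := (T %/ L)%N; set q := zigzagn L W T.
have Eq : q = mirror L k (T %% L).
  by rewrite /q {1}(divn_eq T L) zigzagn_block // ?ltn_divLR ?ltn_pmod // mulnC.
have Hq : (q < L)%N by rewrite Eq mirror_lt // ltn_pmod.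
have Hz : code_fn (c0 * chunk_len + m0 * blk_len + p)%N%:R =
          \sum_(j < L) (theta (bit_index c0 m0 k j))%:R * (2 ^+ j.+1)^-1.
  exact: code_fn_at.
rewrite /interp (@extract_bits_val R offset_fn L 0 code_fn _ (fun j => theta (bit_index c0 m0 k j))
                 q Hz (offset_fn_at Hc Hm Hp)).
rewrite (bigD1 (Ordinal Hq)) //= big1 ?addr0 => [|j Hj]; last first.
  by rewrite ifF //; apply/negbTE; apply: contra Hj => /eqP E; apply/eqP/val_inj.
by rewrite eqxx /bit_index Eq mirrorK ?ltn_pmod // mulnC -divn_eq mirrorK.
Qed.

Lemma lip_le_interp : lip_le interp (2 * 2 ^+ (L ^ 2) + (L ^ 2)%:R).
Proof.
have Hy := cell_lip_lip ler01 cell_lip_code_fn.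
have Hb := cell_lip_lip (ler0n R L) cell_lip_offset_fn.
apply: lip_le_mono (lip_le_extract_bits L (ler0n R L) Hb 0 ler01 Hy).
have EL2 : (L ^ 2 = L * L)%N by rewrite expnS expn1.
have F1 : ((extract_lip L)%:R : R) <= 2 ^+ (L ^ 2).
  by rewrite EL2 -natrX ler_nat; apply: extract_lip_le.
have F2 : ((L ^ 2)%:R : R) <= 2 ^+ (L ^ 2) by rewrite -natrX ler_nat ltnW // ltn_expl.
have F3 : ((2 * L)%:R * L%:R : R) = 2 * (L ^ 2)%:R by rewrite EL2 !natrM; ring.
by rewrite mulr1 F3; lra.
Qed.

End Interpolation.

Unset Implicit Arguments.

Theorem lemma30 (R : realType) (W L : nat) (theta : nat -> bool) :
  (6 <= W)%N -> (2 <= L)%N ->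
  exists phi : R -> R,
    [/\ in_NN (8 * W + 4) (4 * L) phi,
        (forall i : nat, (i < W ^ 2 * L ^ 2)%N -> phi i%:R = (theta i)%:R)
      & lip_le phi (2 * 2 ^+ (L ^ 2) + (L ^ 2)%:R)].
Proof.
move=> W_ge6 L_ge2.
have L_gt0 : (0 < L)%N by lia.
have W_gt0 : (0 < W)%N by lia.
exists (interp L W theta); split.
- by apply: realizable_in_NN (realizable_interp R L theta _); lia.
- by move=> i Hi; apply: interp_at => //; rewrite /chunk_len /blk_len; nia.
- exact: lip_le_interp.
Qed.
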